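(* Let $d\ge2$ and let $Q$ be a qplex. A map $f:S\to Q$ is an isomorphism of quantum state space onto $Q$ if and only if there is a SIC $\{\Pi_j\}_{j=1}^{d^2}$ such that $(f(\rho))(j)=\frac1d\mathrm{Tr}(\rho\Pi_j)$ for all $j$ and all $\rho\in S$. In particular, a SIC exists in dimension $d$ if and only if a Hilbert qplex exists in $\mathbb{R}^{d^2}$.
   Context: Fix an integer $d\ge 2$. $\langle\cdot,\cdot\rangle$ is the standard inner product on $\mathbb{R}^{d^2}$, $\|\cdot\|$ the Euclidean norm. $\Delta=\{p\in\mathbb{R}^{d^2}: p(i)\ge0,\ \sum_ip(i)=1\}$; $H=\{u\in\mathbb{R}^{d^2}:\sum_i u(i)=1\}$; $c=(1/d^2,\dots,1/d^2)$. For $A\subseteq H$ the polar is $A^*=\{u\in H:\langle u,v\rangle\ge\frac{1}{d(d+1)}\ \forall v\in A\}$. Out-ball $B_{\rm o}=\{u\in H:\|u-c\|\le r_{\rm o}\}$, $r_{\rm o}^2=\frac{d-1}{d^2(d+1)}$. A qplex is a set $Q\subseteq\Delta\cap B_{\rm o}$ with $Q^*=Q$. Let $B_H$ be the real vector space of Hermitian operators on $\mathbb{C}^d$ and $S$ the set of density matrices (positive semidefinite, trace 1). An isomorphism of quantum state space onto a qplex $Q$ is (the restriction to $S$ of) an $\mathbb{R}$-linear bijection $f:B_H\to\mathbb{R}^{d^2}$ with $f(S)=Q$ and $\langle f(\rho),f(\rho')\rangle=\frac{\mathrm{Tr}(\rho\rho')+1}{d(d+1)}$ for all $\rho,\rho'\in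 S$; a qplex admitting such an $f$ is a Hilbert qplex. A SIC in dimension $d$ is a set of $d^2$ rank-one orthogonal projectors $\Pi_1,\dots,\Pi_{d^2}$ on $\mathbb{C}^d$ with $\mathrm{Tr}(\Pi_k\Pi_l)=\frac{d\delta_{kl}+1}{d+1}$. *)

(* Complex numbers: an arbitrary numClosedFieldType C
   (e.g. algC); the reals are the elements x with x \is Num.real. *)
From HB Require Import structures.
From mathcomp Require Import all_boot all_order all_algebra.
Set Implicit Arguments. Unset Strict Implicit. Unset Printing Implicit Defensive.
Import Order.TTheory GRing.Theory Num.Theory.
Local Open Scope ring_scope.

Section QplexDefs.
Variable C : numClosedFieldType.
Variable d : nat.

(* vectors of R^{d^2} are row vectors with real entries *)
Definition vec := 'rV[C]_(d ^ 2).
Definition mat := 'M[C]_d.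

Definition realvec (u : vec) : Prop := forall i, u 0 i \is Num.real.

Definition ip (u v : vec) : C := \sum_(i < d ^ 2) u 0 i * v 0 i.

Definition inH (u : vec) : Prop := realvec u /\ \sum_(i < d ^ 2) u 0 i = 1.
Definition inDelta (u : vec) : Prop := inH u /\ forall i, 0 <= u 0 i.
Definition centre : vec := \row_(i < d ^ 2) ((d ^ 2)%:R)^-1.
Definition r_out2 : C := (d.-1)%:R / ((d ^ 2)%:R * (d.+1)%:R).
Definition inBout (u : vec) : Prop := inH u /\ ip (u - centre) (u - centre) <= r_out2.

Definition polar (A : vec -> Prop) (u : vec) : Prop :=
  inH u /\ forall v, A v -> (d%:R * (d.+1)%:R)^-1 <= ip u v.

Definition qplex (Q : vec -> Prop) : Prop :=
  (forall u, Q u -> inDelta u /\ inBout u) /\ (forall u, polar Q u <-> Q u).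

Definition adjmx (A : mat) : mat := (map_mx Num.conj A)^T.
Definition hermitian (A : mat) : Prop := adjmx A = A.
Definition psd (A : mat) : Prop :=
  forall x : 'cV[C]_d, 0 <= ((map_mx Num.conj x)^T *m A *m x) 0 0.
Definition density (rho : mat) : Prop := hermitian rho /\ psd rho /\ \tr rho = 1.

Definition RlinBij (f : mat -> vec) : Prop :=
  (forall A, hermitian A -> realvec (f A)) /\
  (forall (a : C) A B, a \is Num.real -> hermitian A -> hermitian B ->
      f (a *: A + B) = a *: f A + f B) /\
  (forall A B, hermitian A -> hermitian B -> f A = f B -> A = B) /\
  (forall u, realvec u -> exists2 A, hermitian A & f A = u).

Definition isomorphism_onto (g : mat -> vec) (Q : vec -> Prop) : Prop :=
  exists f : mat -> vec,
    RlinBij f /\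
    (forall rho, density rho -> f rho = g rho) /\
    (forall u, Q u <-> exists2 rho, density rho & f rho = u) /\
    (forall rho rho', density rho -> density rho' ->
       ip (f rho) (f rho') = (\tr (rho *m rho') + 1) / (d%:R * (d.+1)%:R)).

Definition hilbert_qplex (Q : vec -> Prop) : Prop :=
  qplex Q /\ exists g, isomorphism_onto g Q.

Definition rank_one_projector (P : mat) : Prop :=
  hermitian P /\ P *m P = P /\ \rank P = 1%N.

Definition SIC (Pi : 'I_(d ^ 2) -> mat) : Prop :=
  (forall k, rank_one_projector (Pi k)) /\
  (forall k l, \tr (Pi k *m Pi l) = (d%:R * (k == l)%:R + 1) / (d.+1)%:R).

End QplexDefs.

From Pilot Require Import Defs.
From HB Require Import structures.
From mathcomp Require Import all_boot all_order all_algebra.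
From mathcomp Require Import ring.
From mathcomp Require sesquilinear spectral.
Set Implicit Arguments. Unset Strict Implicit. Unset Printing Implicit Defensive.
Import Order.TTheory GRing.Theory Num.Theory.
Local Open Scope ring_scope.
(* [sesquilinear] declares a global [hermitian] notation of its own. *)
Local Notation hermitian := Defs.hermitian.

(** A SIC {Pi_j} has Gram matrix Tr(Pi_j Pi_k) = (d delta_jk + 1)/(d+1), which
    forces the Pi_j to be linearly independent, hence a basis of the operators.
    So rho |-> (Tr(rho Pi_j)/d)_j is a linear bijection, and expanding in the
    basis gives <f A, f B> = (Tr AB + Tr A Tr B)/(d(d+1)).  Positivity of Tr(rho
    sigma) on states then makes the image of the states self-polar, and
    Tr rho^2 <= 1 puts it in the out-ball.

    Conversely, given an isomorphism f, pull the standard basis vectors back to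
    Hermitian A_k and put P_k = (A_k + Tr A_k)/(d+1).  Then f(rho)_k =
    Tr(rho P_k)/d, so the P_k are positive (f maps states into the simplex) and
    Tr(P_k P_l) = (d delta_kl + Tr P_k Tr P_l)/(d+1).  For k = l, Tr P_k^2 <=
    (Tr P_k)^2 gives Tr P_k >= 1, while the image of the maximally mixed state
    gives sum_k Tr P_k = d^2; so every Tr P_k = Tr P_k^2 = 1 and each P_k is a
    rank-one projector. *)

Section ConjugateTranspose.
Variable C : numClosedFieldType.

Definition ctrmx m n (A : 'M[C]_(m, n)) : 'M[C]_(n, m) := (map_mx Num.conj A)^T.

Lemma ctrmxE m n (A : 'M[C]_(m, n)) i j : ctrmx A i j = (A j i)^*.
Proof. by rewrite !mxE. Qed.

Lemma ctrmxK m n (A : 'M[C]_(m, n)) : ctrmx (ctrmx A) = A.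
Proof. by apply/matrixP=> i j; rewrite !ctrmxE conjCK. Qed.

Lemma ctrmx_mul m n p (A : 'M[C]_(m, n)) (B : 'M[C]_(n, p)) :
  ctrmx (A *m B) = ctrmx B *m ctrmx A.
Proof. by rewrite /ctrmx map_mxM trmx_mul. Qed.

Lemma ctrmxD m n (A B : 'M[C]_(m, n)) : ctrmx (A + B) = ctrmx A + ctrmx B.
Proof. by apply/matrixP=> i j; rewrite !mxE rmorphD. Qed.

Lemma ctrmxZ m n a (A : 'M[C]_(m, n)) : ctrmx (a *: A) = a^* *: ctrmx A.
Proof. by apply/matrixP=> i j; rewrite !mxE rmorphM. Qed.

Lemma ctrmx1 n : ctrmx (1%:M : 'M[C]_n) = 1%:M.
Proof. by rewrite /ctrmx map_mx1 trmx1. Qed.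

Lemma mxtrace_ctrmx n (A : 'M[C]_n) : \tr (ctrmx A) = (\tr A)^*.
Proof. by rewrite /ctrmx mxtrace_tr (trace_map_mx Num.conj). Qed.

Lemma ctrmx_delta n (i : 'I_n) : ctrmx (delta_mx i 0 : 'cV[C]_n) = delta_mx 0 i.
Proof. by apply/matrixP=> a b; rewrite !mxE conjC_nat andbC. Qed.

Lemma ctrmx_mulmx11 n (x y : 'cV[C]_n) :
  (ctrmx x *m y) 0 0 = ((ctrmx y *m x) 0 0)^*.
Proof. by rewrite -ctrmxE ctrmx_mul ctrmxK. Qed.

Lemma cnorm_gt0 n (x : 'cV[C]_n) : x != 0 -> 0 < (ctrmx x *m x) 0 0.
Proof.
move=> xn0; have [i xi] : exists i, x i 0 != 0.
  apply/existsP; apply: contraR xn0 => /existsPn x0.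
  by apply/eqP/matrixP=> i j; rewrite ord1 mxE; apply/eqP/negbNE/x0.
rewrite mxE (bigD1 i) //= ltr_wpDr //.
  by apply: sumr_ge0 => k _; rewrite ctrmxE mulrC mul_conjC_ge0.
by rewrite ctrmxE mulrC lt_def mul_conjC_ge0 andbT mulf_neq0 // conjC_eq0.
Qed.

End ConjugateTranspose.

Section HermitianPsd.
Variables (C : numClosedFieldType) (n : nat).
Local Notation mat := 'M[C]_n.

Lemma hermitianE (A : mat) : hermitian A <-> ctrmx A = A.
Proof. by []. Qed.

Lemma hermitian_mxtrace_real (A : mat) : hermitian A -> \tr A \is Num.real.
Proof. by move=> /hermitianE hA; apply/CrealP; rewrite -mxtrace_ctrmx hA. Qed.

Lemma hermitian_mxtraceM_real (A B : mat) :
  hermitian A -> hermitian B -> \tr (A *m B) \is Num.real.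
Proof.
move=> /hermitianE hA /hermitianE hB; apply/CrealP.
by rewrite -mxtrace_ctrmx ctrmx_mul hA hB mxtrace_mulC.
Qed.

Lemma hermitianD (A B : mat) : hermitian A -> hermitian B -> hermitian (A + B).
Proof. by move=> /hermitianE hA /hermitianE hB; rewrite hermitianE ctrmxD hA hB. Qed.

Lemma hermitianZ a (A : mat) : a \is Num.real -> hermitian A -> hermitian (a *: A).
Proof. by move=> /CrealP ar /hermitianE hA; rewrite hermitianE ctrmxZ ar hA. Qed.

Lemma hermitian1 : hermitian (1%:M : mat).
Proof. exact: ctrmx1. Qed.

Lemma hermitian0 : hermitian (0 : mat).
Proof. by apply/matrixP=> i j; rewrite !mxE rmorph0. Qed.

Lemma psdZ a (A : mat) : 0 <= a -> psd A -> psd (a *: A).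
Proof. by move=> a0 pA x; rewrite -scalemxAr -scalemxAl mxE mulr_ge0. Qed.

Lemma psd_congr m (A : mat) (B : 'M[C]_(m, n)) : psd A -> psd (B *m A *m ctrmx B).
Proof.
by move=> pA x; have := pA (ctrmx B *m x); rewrite -!/(ctrmx _) ctrmx_mul ctrmxK !mulmxA.
Qed.

Lemma psd1 : psd (1%:M : mat).
Proof.
move=> x; rewrite mulmx1 mxE; apply: sumr_ge0 => i _.
by rewrite !mxE mulrC mul_conjC_ge0.
Qed.

Lemma psd_projector (P : mat) : hermitian P -> P *m P = P -> psd P.
Proof.
move=> /hermitianE hP PP; have := psd_congr P psd1.
by rewrite mulmx1 hP PP.
Qed.

Lemma psd_diag_ge0 (A : mat) i : psd A -> 0 <= A i i.
Proof.
by move=> pA; have := pA (delta_mx i 0); rewrite -/(ctrmx _) ctrmx_delta -rowE -colE !mxE.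
Qed.

Lemma psd_mxtrace_ge0 (A : mat) : psd A -> 0 <= \tr A.
Proof. by move=> pA; apply: sumr_ge0 => i _; apply: psd_diag_ge0. Qed.

Lemma density_mxtrace_ge0_psd (A : mat) :
  (forall rho, density rho -> 0 <= \tr (A *m rho)) -> psd A.
Proof.
(* Test A against the pure state x x^* / |x|^2. *)
move=> trA x; have [->|xn0] := eqVneq x 0; first by rewrite mulmx0 mxE.
set nx := (ctrmx x *m x) 0 0; have nx_gt0 : 0 < nx := cnorm_gt0 xn0.
pose rho := nx^-1 *: (x *m ctrmx x).
have rho_density : density rho.
  split; [|split].
  - apply: hermitianZ; first by rewrite rpredV gtr0_real.
    by rewrite hermitianE ctrmx_mul ctrmxK.
  - move=> y; rewrite -/(ctrmx y) -scalemxAr -scalemxAl mxE.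
    rewrite mulr_ge0 ?invr_ge0 ?(ltW nx_gt0) //.
    rewrite !mulmxA -[_ *m ctrmx x *m y]mulmxA mxE big_ord1 ctrmx_mulmx11.
    by rewrite mulrC mul_conjC_ge0.
  - by rewrite /rho mxtraceZ mxtrace_mulC trace_mx11 mulVf // gt_eqF.
have := trA rho rho_density.
rewrite -scalemxAr mxtraceZ mulmxA mxtrace_mulC mulmxA trace_mx11.
by rewrite pmulr_rge0 // invr_gt0.
Qed.

End HermitianPsd.

Lemma sum_sqr_le_sqr_sum (R : numDomainType) (I : finType) (F : I -> R) :
  (forall i, 0 <= F i) -> \sum_i F i ^+ 2 <= (\sum_i F i) ^+ 2.
Proof.
move=> F_ge0; rewrite expr2 mulr_suml; apply: ler_sum => i _.
rewrite expr2 ler_wpM2l // (bigD1 i) //= lerDl.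
by apply: sumr_ge0 => j _.
Qed.

Lemma sum_eq1_sqr_eq1 (R : numDomainType) (I : finType) (F : I -> R) :
  (forall i, 0 <= F i) -> \sum_i F i = 1 -> \sum_i F i ^+ 2 = 1 ->
  exists i0, forall i, F i = (i == i0)%:R.
Proof.
move=> F_ge0 sumF1 sumF2.
have F_le1 i : F i <= 1.
  by rewrite -sumF1 (bigD1 i) //= lerDl; apply: sumr_ge0 => j _.
have F_idem i : F i ^+ 2 = F i.
  have gap_ge0 j : true -> 0 <= F j - F j ^+ 2.
    by move=> _; rewrite expr2 -{1}(mulr1 (F j)) -mulrBr mulr_ge0 ?subr_ge0 ?F_le1.
  have gap0 : \sum_j (F j - F j ^+ 2) = 0 by rewrite sumrB sumF1 sumF2 subrr.
  by apply/eqP; rewrite eq_sym -subr_eq0; apply/eqP/(psumr_eq0P gap_ge0 gap0).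
have [i0 /andP[_ Fi0_gt0]] : exists i0, true && (0 < F i0).
  by apply: (psumr_neq0P (fun j _ => F_ge0 j)); rewrite sumF1; apply/eqP/oner_neq0.
have Fi0 : F i0 = 1.
  by apply: (mulIf (lt0r_neq0 Fi0_gt0)); rewrite mul1r -expr2 F_idem.
have others0 : \sum_(j | j != i0) F j = 0.
  by move: sumF1; rewrite (bigD1 i0) //= Fi0 -{2}[1]addr0 => /addrI.
exists i0 => i; have [->|ne] := eqVneq i i0; first by rewrite Fi0.
by apply: (psumr_eq0P _ others0) => // j _.
Qed.

Section Spectral.
Variables (C : numClosedFieldType) (n : nat).
Local Notation mat := 'M[C]_n.

Definition spectral_form (U : mat) (l : 'rV[C]_n) : mat := ctrmx U *m diag_mx l *m U.

Lemma hermitian_spectral (A : mat) : hermitian A ->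
  exists U (l : 'rV[C]_n), [/\ U *m ctrmx U = 1%:M, ctrmx U *m U = 1%:M,
    (forall i, l 0 i \is Num.real) & A = spectral_form U l].
Proof.
move=> hA.
have hA' : A \is sesquilinear.hermitianmx n false Num.conj.
  apply/sesquilinear.is_hermitianmxP; rewrite expr0 scale1r -map_trmx.
  exact: (esym hA).
have UU : spectral.spectralmx A *m ctrmx (spectral.spectralmx A) = 1%:M.
  by move/spectral.unitarymxP: (spectral.spectral_unitarymx A); rewrite /ctrmx map_trmx.
exists (spectral.spectralmx A), (spectral.spectral_diag A); split => //.
- exact: mulmx1C.
- by apply/mxOverP; apply: spectral.hermitian_spectral_diag_real.
- have /spectral.orthomx_spectralP eA := spectral.hermitian_normalmx hA'.
  rewrite /spectral_form {1}eA spectral.invmx_unitary ?spectral.spectral_unitarymx //.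
  by rewrite -map_trmx.
Qed.

Section Unitary.
Variable U : mat.
Hypothesis UU : U *m ctrmx U = 1%:M.

Lemma spectral_form_psd_ge0 (l : 'rV[C]_n) :
  psd (spectral_form U l) -> forall i, 0 <= l 0 i.
Proof.
move=> pA i; have := pA (ctrmx U *m delta_mx i 0).
rewrite -/(ctrmx _) ctrmx_mul ctrmxK ctrmx_delta /spectral_form !mulmxA.
rewrite -[delta_mx 0 i *m U *m ctrmx U]mulmxA UU mulmx1.
rewrite -[_ *m U *m ctrmx U]mulmxA UU mulmx1.
by rewrite -rowE -colE !mxE eqxx mulr1n.
Qed.

Lemma mxtrace_spectral_form (l : 'rV[C]_n) : \tr (spectral_form U l) = \sum_i l 0 i.
Proof. by rewrite mxtrace_mulC mulmxA UU mul1mx mxtrace_diag. Qed.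

Lemma spectral_form_sqr (l : 'rV[C]_n) :
  spectral_form U l *m spectral_form U l = spectral_form U (\row_j l 0 j ^+ 2).
Proof.
rewrite /spectral_form !mulmxA -[_ *m U *m ctrmx U]mulmxA UU mulmx1.
rewrite -[_ *m diag_mx l *m diag_mx l]mulmxA mulmx_diag.
by congr (_ *m diag_mx _ *m _); apply/rowP=> j; rewrite !mxE expr2.
Qed.

Lemma mxtrace_spectral_form_sqr (l : 'rV[C]_n) :
  \tr (spectral_form U l *m spectral_form U l) = \sum_i l 0 i ^+ 2.
Proof.
by rewrite spectral_form_sqr mxtrace_spectral_form; apply: eq_bigr => i _; rewrite mxE.
Qed.

End Unitary.

Lemma spectral_form_psd (U : mat) (l : 'rV[C]_n) :
  (forall i, 0 <= l 0 i) -> psd (spectral_form U l).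
Proof.
move=> l_ge0 y; rewrite -/(ctrmx y) /spectral_form !mulmxA -ctrmx_mul.
rewrite -mulmxA mul_mx_diag mxE; apply: sumr_ge0 => j _.
by rewrite !mxE mulrAC mulr_ge0 // mulrC mul_conjC_ge0.
Qed.

Lemma psd_mxtraceM_ge0 (A B : mat) :
  psd A -> hermitian B -> psd B -> 0 <= \tr (A *m B).
Proof.
move=> pA hB pB; have [U [l [UU _ _ eB]]] := hermitian_spectral hB.
rewrite eB in pB *; rewrite /spectral_form mulmxA mxtrace_mulC !mulmxA.
rewrite mul_mx_diag; apply: sumr_ge0 => i _; rewrite mxE mulr_ge0 //.
  exact: psd_diag_ge0 (psd_congr _ pA).
exact: (spectral_form_psd_ge0 UU pB i).
Qed.

Lemma psd_mxtrace_sqr_le (P : mat) :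
  hermitian P -> psd P -> \tr (P *m P) <= \tr P ^+ 2.
Proof.
move=> hP pP; have [U [l [UU _ _ eP]]] := hermitian_spectral hP.
rewrite eP in pP *; rewrite mxtrace_spectral_form_sqr // mxtrace_spectral_form //.
exact: sum_sqr_le_sqr_sum (spectral_form_psd_ge0 UU pP).
Qed.

Lemma rank_one_projector_mxtrace (P : mat) : hermitian P -> psd P ->
  \tr P = 1 -> \tr (P *m P) = 1 -> P *m P = P /\ \rank P = 1%N.
Proof.
move=> hP pP trP1 trPP1; have [U [l [UU UU' _ eP]]] := hermitian_spectral hP.
rewrite eP in pP trP1 trPP1 *.
rewrite mxtrace_spectral_form // in trP1.
rewrite mxtrace_spectral_form_sqr // in trPP1.
have [i0 li0] : exists i0 : 'I_n, forall i, l 0 i = (i == i0)%:R.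
  exact: sum_eq1_sqr_eq1 (spectral_form_psd_ge0 UU pP) trP1 trPP1.
have l_idem : \row_j l 0 j ^+ 2 = l.
  by apply/rowP=> j; rewrite mxE li0 -natrX; case: (j == i0).
have l_delta : diag_mx l = delta_mx i0 i0.
  apply/matrixP=> a b; rewrite !mxE li0.
  have [->|ne] := eqVneq a b; first by rewrite mulr1n andbb.
  rewrite mulr0n; have [eai|//] := eqVneq a i0.
  by rewrite -eai eq_sym (negPf ne).
split; first by rewrite spectral_form_sqr // l_idem.
rewrite /spectral_form l_delta mxrankMfree; last first.
  by rewrite row_free_unit; case: (mulmx1_unit UU).
rewrite eqmxMfull ?mxrank_delta // row_full_unit.
by case: (mulmx1_unit UU').
Qed.

End Spectral.

Lemma sum_mul_delta (R : pzSemiRingType) (I : finType) (F : I -> R) k :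
  \sum_j F j * (j == k)%:R = F k.
Proof.
rewrite (bigD1 k) //= eqxx mulr1 big1 ?addr0 // => j /negPf ->.
by rewrite mulr0.
Qed.

Lemma mxtrace_sum (R : pzSemiRingType) n (I : finType) (F : I -> 'M[R]_n) :
  \tr (\sum_i F i) = \sum_i \tr (F i).
Proof. exact: raddf_sum. Qed.

(* Needs a hypothesis [0 < d] in the context to discharge [d%:R != 0]. *)
Local Ltac field_nat := field; rewrite ?nat1r ?pnatr_eq0 -?lt0n ?ltn0Sn ?andbT ?andTb.

Section InnerProduct.
Variables (C : numClosedFieldType) (d : nat).
Local Notation vec := (vec C d).

Lemma ipC (u v : vec) : ip u v = ip v u.
Proof. by apply: eq_bigr => i _; rewrite mulrC. Qed.

Lemma ipDl (u v w : vec) : ip (u + v) w = ip u w + ip v w.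
Proof. by rewrite /ip -big_split; apply: eq_bigr => i _; rewrite mxE mulrDl. Qed.

Lemma ipZl a (u w : vec) : ip (a *: u) w = a * ip u w.
Proof. by rewrite /ip mulr_sumr; apply: eq_bigr => i _; rewrite mxE mulrA. Qed.

Lemma ipDr (u v w : vec) : ip w (u + v) = ip w u + ip w v.
Proof. by rewrite ipC ipDl !(ipC w). Qed.

Lemma ipZr a (u w : vec) : ip w (a *: u) = a * ip w u.
Proof. by rewrite ipC ipZl ipC. Qed.

Lemma ip_delta_mx (v : vec) k : ip v (delta_mx 0 k) = v 0 k.
Proof.
by rewrite /ip -[RHS](sum_mul_delta (v 0)); apply: eq_bigr => i _; rewrite mxE.
Qed.

Lemma ip_sub_centre (u : vec) : (0 < d)%N ->
  ip (u - centre C d) (u - centre C d) =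
  ip u u - 2%:R / (d ^ 2)%:R * \sum_i u 0 i + (d ^ 2)%:R^-1.
Proof.
move=> d_gt0; rewrite /ip (eq_bigr (fun i => u 0 i * u 0 i - 2%:R / (d ^ 2)%:R * u 0 i
   + (d ^ 2)%:R^-1 / (d ^ 2)%:R)); last by move=> i _; rewrite !mxE; ring.
rewrite big_split /= sumrB -mulr_sumr sumr_const card_ord -mulr_natl.
by rewrite natrX; field_nat.
Qed.

End InnerProduct.

Section SIC.
Variables (C : numClosedFieldType) (d : nat) (Pi : 'I_(d ^ 2) -> mat C d).
Hypotheses (d_gt0 : (0 < d)%N) (sicPi : SIC Pi).
Local Notation mat := (mat C d).
Local Notation vec := (vec C d).

Lemma sic_hermitian j : hermitian (Pi j).
Proof. by case: (sicPi.1 j). Qed.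

Lemma sic_psd j : psd (Pi j).
Proof. by case: (sicPi.1 j) => hP [PP _]; apply: psd_projector. Qed.

Lemma sic_mxtrace j : \tr (Pi j) = 1.
Proof.
have [[_ [PP _]] trPP] := (sicPi.1 j, sicPi.2 j j).
by rewrite PP eqxx mulr1 in trPP; rewrite trPP; field_nat.
Qed.

Lemma mxtrace_sic_comb (c : 'I_(d ^ 2) -> C) : \tr (\sum_j c j *: Pi j) = \sum_j c j.
Proof.
by rewrite mxtrace_sum; apply: eq_bigr => j _; rewrite mxtraceZ sic_mxtrace mulr1.
Qed.

Lemma mxtrace_sic_combM (c : 'I_(d ^ 2) -> C) k :
  \tr ((\sum_j c j *: Pi j) *m Pi k) = (d%:R * c k + \sum_j c j) / d.+1%:R.
Proof.
rewrite mulmx_suml mxtrace_sum.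
rewrite (eq_bigr (fun j => (d%:R / d.+1%:R * c j) * (j == k)%:R + d.+1%:R^-1 * c j)).
  by rewrite big_split /= sum_mul_delta -mulr_sumr; ring.
by move=> j _; rewrite -scalemxAl mxtraceZ sicPi.2; ring.
Qed.

Lemma sic_comb_eq0 (c : 'I_(d ^ 2) -> C) :
  \sum_j c j *: Pi j = 0 -> forall k, c k = 0.
Proof.
move=> c0; have coef0 k : d%:R * c k + \sum_j c j = 0.
  have := mxtrace_sic_combM c k; rewrite c0 mul0mx mxtrace0 => /esym/eqP.
  by rewrite mulf_eq0 invr_eq0 pnatr_eq0 orbF => /eqP.
have sum0 : \sum_j c j = 0.
  have : \sum_k (d%:R * c k + \sum_j c j) = (d + d ^ 2)%:R * \sum_j c j.
    by rewrite big_split /= -mulr_sumr sumr_const card_ord natrD mulrDl !mulr_natl.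
  rewrite big1 // => /esym/eqP.
  by rewrite mulf_eq0 pnatr_eq0 addn_eq0 (negPf (lt0n_neq0 d_gt0)) => /eqP.
move=> k; have /eqP := coef0 k.
by rewrite sum0 addr0 mulf_eq0 pnatr_eq0 (negPf (lt0n_neq0 d_gt0)) => /eqP.
Qed.

Lemma sic_span (A : mat) : exists c : 'I_(d ^ 2) -> C, A = \sum_j c j *: Pi j.
Proof.
pose X := [tuple Pi j | j < d ^ 2].
have X_free : free X.
  apply/freeP=> c cX0; apply: sic_comb_eq0; rewrite -[RHS]cX0.
  by apply: eq_bigr => j _; rewrite nth_mktuple.
have X_basis : basis_of fullv X.
  by rewrite basisEfree X_free subvf dimvf /= size_tuple card_ord dim_matrix -mulnn.
exists (coord X ^~ A).
rewrite {1}(coord_span (_ : A \in span X)) ?(span_basis X_basis) ?memvf //.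
by apply: eq_bigr => j _; rewrite nth_mktuple.
Qed.

Lemma sic_reconstruction (A : mat) :
  A = \sum_j ((d.+1%:R * \tr (A *m Pi j) - \tr A) / d%:R) *: Pi j.
Proof.
have [c eA] := sic_span A; rewrite {1}eA; apply: eq_bigr => j _.
by rewrite eA mxtrace_sic_combM mxtrace_sic_comb; congr (_ *: _); field_nat.
Qed.

Lemma sum_sic : \sum_j Pi j = d%:R *: 1%:M.
Proof.
have e := sic_reconstruction 1%:M.
rewrite (eq_bigr (fun j => d%:R^-1 *: Pi j)) -?scaler_sumr in e; last first.
  by move=> j _; rewrite mul1mx sic_mxtrace mxtrace1; congr (_ *: _); field_nat.
by rewrite [in RHS]e scalerA divff ?scale1r // pnatr_eq0 -lt0n.
Qed.

Lemma sum_mxtraceM_sic (A : mat) : \sum_j \tr (A *m Pi j) = d%:R * \tr A.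
Proof. by rewrite -mxtrace_sum -mulmx_sumr sum_sic -scalemxAr mulmx1 mxtraceZ. Qed.

Definition sic_map (A : mat) : vec := \row_j (d%:R^-1 * \tr (A *m Pi j)).

Lemma sic_mapE (A : mat) j : sic_map A 0 j = d%:R^-1 * \tr (A *m Pi j).
Proof. by rewrite mxE. Qed.

Lemma sum_sic_map (A : mat) : \sum_j sic_map A 0 j = \tr A.
Proof.
by under eq_bigr do rewrite sic_mapE; rewrite -mulr_sumr sum_mxtraceM_sic; field_nat.
Qed.

Lemma sic_mapDZ a (A B : mat) : sic_map (a *: A + B) = a *: sic_map A + sic_map B.
Proof.
by apply/rowP=> j; rewrite !mxE mulmxDl -scalemxAl mxtraceD mxtraceZ; ring.
Qed.

Lemma sic_map_real (A : mat) : hermitian A -> realvec (sic_map A).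
Proof.
move=> hA j; rewrite mxE realM ?rpredV ?realn //.
exact: hermitian_mxtraceM_real hA (sic_hermitian j).
Qed.

Lemma sic_map_inj (A B : mat) : sic_map A = sic_map B -> A = B.
Proof.
move=> eAB; rewrite (sic_reconstruction A) (sic_reconstruction B).
rewrite -!sum_sic_map eAB; apply: eq_bigr => j _.
have trM (X : mat) : \tr (X *m Pi j) = d%:R * sic_map X 0 j by rewrite sic_mapE; field_nat.
by rewrite !trM eAB.
Qed.

Lemma sic_map_surj (u : vec) : realvec u -> exists2 A, hermitian A & sic_map A = u.
Proof.
move=> ur; set s := \sum_k u 0 k.
have sr : s \is Num.real by apply: rpred_sum => k _; exact: ur.
pose c j := d.+1%:R * u 0 j - s / d%:R.
have sum_c : \sum_j c j = s.
  rewrite /c sumrB -mulr_sumr -/s sumr_const card_ord -[_ *+ _]mulr_natl.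
  by field_nat.
exists (\sum_j c j *: Pi j).
  apply: (big_ind (fun X : mat => hermitian X)) => [|X Y|j _].
  - exact: hermitian0.
  - exact: hermitianD.
  - by apply: hermitianZ (sic_hermitian j); rewrite rpredB ?realM ?rpredV ?realn ?ur ?sr.
apply/rowP=> k; rewrite sic_mapE mxtrace_sic_combM sum_c.
by rewrite /c; field_nat.
Qed.

Lemma sic_map_RlinBij : RlinBij sic_map.
Proof.
split; [exact: sic_map_real | split; [|split]].
- by move=> a A B _ _ _; exact: sic_mapDZ.
- by move=> A B _ _; exact: sic_map_inj.
- exact: sic_map_surj.
Qed.

Local Notation K := (d%:R * d.+1%:R : C).

Lemma ip_sic_map (A B : mat) :
  ip (sic_map A) (sic_map B) = (\tr (A *m B) + \tr A * \tr B) / K.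
Proof.
have trAB : \tr (A *m B) =
    d.+1%:R / d%:R * \sum_j \tr (A *m Pi j) * \tr (B *m Pi j) - \tr A * \tr B.
  rewrite {1}(sic_reconstruction B) mulmx_sumr mxtrace_sum.
  under eq_bigr do rewrite -scalemxAr mxtraceZ.
  rewrite (eq_bigr (fun j => d.+1%:R / d%:R * (\tr (A *m Pi j) * \tr (B *m Pi j))
    - \tr B / d%:R * \tr (A *m Pi j))); last by move=> j _; field_nat.
  by rewrite sumrB -!mulr_sumr sum_mxtraceM_sic; field_nat.
rewrite trAB /ip.
under eq_bigr do rewrite !sic_mapE.
rewrite (eq_bigr (fun j => (d%:R ^+ 2)^-1 * (\tr (A *m Pi j) * \tr (B *m Pi j)))).
  by rewrite -mulr_sumr; field_nat.
by move=> j _; field_nat.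
Qed.

Lemma ip_sic_map_density (rho sigma : mat) : density rho -> density sigma ->
  ip (sic_map rho) (sic_map sigma) = (\tr (rho *m sigma) + 1) / K.
Proof. by move=> [_ [_ tr1]] [_ [_ tr2]]; rewrite ip_sic_map tr1 tr2 mulr1. Qed.

Lemma sic_map_density_ge0 (rho : mat) j : density rho -> 0 <= sic_map rho 0 j.
Proof.
move=> [_ [prho _]]; rewrite sic_mapE mulr_ge0 ?invr_ge0 ?ler0n //.
exact: psd_mxtraceM_ge0 prho (sic_hermitian j) (sic_psd j).
Qed.

Lemma sic_map_density_inH (rho : mat) : density rho -> inH (sic_map rho).
Proof. by move=> [hrho [_ tr1]]; split; [exact: sic_map_real | rewrite sum_sic_map]. Qed.

Definition sic_states (u : vec) : Prop := exists2 rho, density rho & sic_map rho = u.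

Lemma K_gt0 : 0 < K.
Proof. by rewrite mulr_gt0 ?ltr0n. Qed.

Lemma sic_states_polar (u : vec) : inH u ->
  (forall rho, density rho -> K^-1 <= ip u (sic_map rho)) -> sic_states u.
Proof.
move=> [ur su] ip_ge; have [A hA eA] := sic_map_surj ur.
have trA : \tr A = 1 by rewrite -sum_sic_map eA.
exists A => //; split; [done | split; [|done]].
apply: density_mxtrace_ge0_psd => rho drho.
have := ip_ge rho drho; rewrite -eA ip_sic_map trA mul1r (proj2 (proj2 drho)).
by rewrite mulrDl mul1r lerDr pmulr_lge0 // invr_gt0 K_gt0.
Qed.

Lemma sic_map_isomorphism (Q : vec -> Prop) (g : mat -> vec) : qplex Q ->
  (forall rho, density rho -> Q (g rho)) ->
  (forall rho, density rho -> forall j, g rho 0 j = d%:R^-1 * \tr (rho *m Pi j)) ->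
  isomorphism_onto g Q.
Proof.
move=> [_ Q_polar] gQ gE.
have g_sic rho : density rho -> g rho = sic_map rho.
  by move=> drho; apply/rowP=> j; rewrite gE // mxE.
exists sic_map; split; [exact: sic_map_RlinBij | split; [|split]].
- by move=> rho /g_sic.
- move=> u; split=> [/Q_polar [uH uP] | [rho drho <-]]; last by rewrite -g_sic //; apply: gQ.
  apply: sic_states_polar uH _ => rho drho.
  by apply: uP; rewrite -g_sic //; apply: gQ.
- exact: ip_sic_map_density.
Qed.

Lemma sic_map_density_inBout (rho : mat) : density rho -> inBout (sic_map rho).
Proof.
move=> drho; have rhoH := sic_map_density_inH drho.
split=> //; rewrite ip_sub_centre // ip_sic_map_density // rhoH.2.
have := psd_mxtrace_sqr_le drho.1 drho.2.1; rewrite drho.2.2 expr1n.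
set x := \tr (rho *m rho) => x_le1.
have -> : (x + 1) / K - 2%:R / (d ^ 2)%:R * 1 + (d ^ 2)%:R^-1 =
   r_out2 C d - (1 - x) / K.
  have pred_d : (d.-1)%:R = d%:R - 1 :> C by rewrite -{2}(prednK d_gt0) -natr1 addrK.
  by rewrite /r_out2 pred_d; field_nat.
by rewrite gerBl divr_ge0 ?subr_ge0 // ltW // K_gt0.
Qed.

Lemma sic_states_qplex : qplex sic_states.
Proof.
split=> [u [rho drho <-] | u].
  split; last exact: sic_map_density_inBout.
  by split=> [|j]; [exact: sic_map_density_inH | exact: sic_map_density_ge0].
split=> [[uH uP] | [rho drho <-]].
  by apply: sic_states_polar uH _ => rho drho; apply: uP; exists rho.
split; first exact: sic_map_density_inH.
move=> v [sigma dsigma <-]; rewrite ip_sic_map_density // mulrDl mul1r lerDr.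
rewrite pmulr_lge0 ?invr_gt0 ?K_gt0 //.
exact: psd_mxtraceM_ge0 drho.2.1 dsigma.1 dsigma.2.1.
Qed.

Lemma sic_map_isomorphism_onto : isomorphism_onto sic_map sic_states.
Proof.
apply: sic_map_isomorphism sic_states_qplex _ _; first by move=> rho drho; exists rho.
by move=> rho _ j; rewrite mxE.
Qed.

End SIC.

Section MaximallyMixed.
Variables (C : numClosedFieldType) (n : nat).
Hypothesis n_gt0 : (0 < n)%N.
Local Notation mat := 'M[C]_n.

Definition maximally_mixed : mat := n%:R^-1 *: 1%:M.

Lemma density_maximally_mixed : density maximally_mixed.
Proof.
split; first by apply: hermitianZ; [rewrite rpredV realn | exact: hermitian1].
split; first by apply: psdZ; [rewrite invr_ge0 ler0n | exact: psd1].
by rewrite mxtraceZ mxtrace1 mulVf // pnatr_eq0 -lt0n.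
Qed.

Lemma hermitian_shift_psd (A : mat) : hermitian A ->
  exists t, [/\ t \is Num.real, psd (A + t *: 1%:M) & n%:R <= \tr (A + t *: 1%:M)].
Proof.
move=> hA; have [U [l [UU UU' l_real eA]]] := hermitian_spectral hA.
pose t := 1 + \sum_i `|l 0 i|.
have l_shift_ge1 i : 1 <= l 0 i + t.
  rewrite /t addrCA lerDl (bigD1 i) //= addrA addr_ge0 ?sumr_ge0 //.
  by rewrite addrC -lerBlDr sub0r -normrN real_ler_norm ?rpredN.
have eAt : A + t *: 1%:M = spectral_form U (\row_i (l 0 i + t)).
  rewrite eA /spectral_form.
  have -> : diag_mx (\row_i (l 0 i + t)) = diag_mx l + t *: 1%:M.
    apply/matrixP=> a b; rewrite !mxE.
    by case: (a == b); rewrite ?mulr1n ?mulr0n ?mulr1 ?mulr0 ?addr0.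
  by rewrite mulmxDr mulmxDl -scalemxAr mulmx1 -scalemxAl UU'.
exists t; split.
- by rewrite rpredD ?rpred1 ?rpred_sum // => i _; apply: normr_real.
- by rewrite eAt; apply: spectral_form_psd => i; rewrite mxE (le_trans _ (l_shift_ge1 i)).
- rewrite eAt mxtrace_spectral_form // -[n in n%:R]card_ord -sumr_const.
  by apply: ler_sum => i _; rewrite mxE.
Qed.

Lemma hermitian_density_decomp (A : mat) : hermitian A -> exists a b rho,
  [/\ a \is Num.real, b \is Num.real, density rho & A = a *: rho + b *: maximally_mixed].
Proof.
move=> hA; have [t [t_real psdAt trAt]] := hermitian_shift_psd hA.
set s := \tr (A + t *: 1%:M) in trAt.
have s_gt0 : 0 < s by apply: lt_le_trans trAt; rewrite ltr0n.
exists s, (- (t * n%:R)), (s^-1 *: (A + t *: 1%:M)); split.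
- exact: gtr0_real.
- by rewrite rpredN realM ?realn.
- split.
    apply: hermitianZ; first by rewrite rpredV gtr0_real.
    by apply: hermitianD hA (hermitianZ t_real (hermitian1 C n)).
  split; last by rewrite mxtraceZ mulVf // gt_eqF.
  by apply: psdZ psdAt; rewrite invr_ge0 ltW.
- rewrite scalerA divff ?gt_eqF // scale1r /maximally_mixed scalerA.
  by rewrite mulNr -mulrA divff ?pnatr_eq0 -?lt0n // mulr1 scaleNr addrK.
Qed.

End MaximallyMixed.

Section IsomorphismToSIC.
Variables (C : numClosedFieldType) (d : nat) (f : mat C d -> vec C d).
Hypotheses (d_gt0 : (0 < d)%N) (f_lin : RlinBij f).
Hypothesis f_ip : forall rho rho', density rho -> density rho' ->
  ip (f rho) (f rho') = (\tr (rho *m rho') + 1) / (d%:R * (d.+1)%:R).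
Hypothesis f_simplex : forall rho, density rho -> inDelta (f rho).
Local Notation mat := (mat C d).
Local Notation K := (d%:R * d.+1%:R : C).

Lemma RlinBij0 : f 0 = 0.
Proof.
have := f_lin.2.1 1 0 0 (rpred1 _) (hermitian0 C d) (hermitian0 C d).
by rewrite !scale1r addr0 => /eqP; rewrite addrC -subr_eq subrr eq_sym => /eqP.
Qed.

Lemma RlinBijZD a b (A B : mat) : a \is Num.real -> b \is Num.real ->
  hermitian A -> hermitian B -> f (a *: A + b *: B) = a *: f A + b *: f B.
Proof.
move=> a_real b_real hA hB; rewrite f_lin.2.1 //; last exact: hermitianZ.
by have := f_lin.2.1 b B 0 b_real hB (hermitian0 C d); rewrite RlinBij0 !addr0 => ->.
Qed.

Lemma ip_RlinBij (A B : mat) : hermitian A -> hermitian B ->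
  ip (f A) (f B) = (\tr (A *m B) + \tr A * \tr B) / K.
Proof.
move=> hA hB.
have [a [b [rho [a_real b_real drho ->]]]] := hermitian_density_decomp d_gt0 hA.
have [a' [b' [sig [a'_real b'_real dsig ->]]]] := hermitian_density_decomp d_gt0 hB.
have [[hrho [_ trrho]] [hsig [_ trsig]]] := (drho, dsig).
have domega := density_maximally_mixed C d_gt0.
have [homega _] := domega.
rewrite !RlinBijZD // !(ipDl, ipDr, ipZl, ipZr) !f_ip //.
rewrite !(mulmxDl, mulmxDr) -!(scalemxAl, scalemxAr) !(mxtraceD, mxtraceZ).
by rewrite !mulmx1 !mul1mx trrho trsig mxtrace1; field_nat.
Qed.

Section Pullback.
Variable A : 'I_(d ^ 2) -> mat.
Hypotheses (A_herm : forall k, hermitian (A k)) (fA : forall k, f (A k) = delta_mx 0 k).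

Definition pullback_proj k : mat := d.+1%:R^-1 *: (A k + \tr (A k) *: 1%:M).
Local Notation P := pullback_proj.

Lemma pullback_proj_hermitian k : hermitian (P k).
Proof.
apply: hermitianZ; first by rewrite rpredV realn.
exact/hermitianD/hermitianZ/hermitian1/hermitian_mxtrace_real.
Qed.

Lemma mxtrace_pullback_proj k : \tr (P k) = \tr (A k).
Proof. by rewrite mxtraceZ mxtraceD mxtraceZ mxtrace1; field_nat. Qed.

Lemma RlinBij_pullbackE rho k : density rho -> f rho 0 k = d%:R^-1 * \tr (rho *m P k).
Proof.
move=> [hrho [_ trrho]].
rewrite -ip_delta_mx -fA ip_RlinBij // trrho mul1r -scalemxAr mxtraceZ mulmxDr.
by rewrite mxtraceD -scalemxAr mxtraceZ mulmx1 trrho; field_nat.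
Qed.

Lemma mxtraceM_pullback_proj k l :
  \tr (P k *m P l) = (d%:R * (k == l)%:R + \tr (P k) * \tr (P l)) / d.+1%:R.
Proof.
have trAA : \tr (A k *m A l) = K * (k == l)%:R - \tr (A k) * \tr (A l).
  have := ip_RlinBij (A_herm k) (A_herm l).
  by rewrite !fA ip_delta_mx mxE eqxx eq_sym /= => ->; field_nat.
rewrite !mxtrace_pullback_proj -scalemxAr -scalemxAl !mxtraceZ.
rewrite !(mulmxDl, mulmxDr) -!(scalemxAl, scalemxAr) !(mxtraceD, mxtraceZ).
by rewrite mulmx1 mul1mx mulmx1 mxtrace1 trAA; field_nat.
Qed.

Lemma pullback_proj_psd k : psd (P k).
Proof.
apply: density_mxtrace_ge0_psd => rho drho; rewrite mxtrace_mulC.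
have := (f_simplex drho).2 k; rewrite RlinBij_pullbackE //.
by rewrite pmulr_rge0 // invr_gt0 ltr0n.
Qed.

Lemma sum_mxtrace_pullback_proj : \sum_k \tr (P k) = (d ^ 2)%:R.
Proof.
have domega := density_maximally_mixed C d_gt0.
have := (f_simplex domega).1.2.
under eq_bigr do rewrite RlinBij_pullbackE // -scalemxAl mul1mx mxtraceZ.
rewrite -!mulr_sumr; set S := \sum_k _ => sum1.
have -> : S = d%:R * d%:R * (d%:R^-1 * (d%:R^-1 * S)) by field_nat.
by rewrite sum1 mulr1 -natrM mulnn.
Qed.

Lemma mxtrace_pullback_proj_ge1 k : 1 <= \tr (P k).
Proof.
(* (d + (Tr P)^2) / (d + 1) = Tr P^2 <= (Tr P)^2 *)
have := psd_mxtrace_sqr_le (pullback_proj_hermitian k) (pullback_proj_psd k).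
rewrite mxtraceM_pullback_proj eqxx mulr1 ler_pdivrMr ?ltr0n // -natr1.
rewrite mulrDr mulr1 expr2 lerD2r -{1}[d%:R]mul1r ler_pM2r ?ltr0n //.
have trP_ge0 : 0 <= \tr (P k) := psd_mxtrace_ge0 (pullback_proj_psd k).
by move=> trP2; rewrite -(ler_pXn2r (n := 2)) ?nnegrE ?ler01 // expr1n expr2.
Qed.

Lemma mxtrace_pullback_proj1 k : \tr (P k) = 1.
Proof.
have gap0 : \sum_j (\tr (P j) - 1) = 0.
  by rewrite sumrB sum_mxtrace_pullback_proj sumr_const card_ord subrr.
have gap_ge0 j : true -> 0 <= \tr (P j) - 1.
  by rewrite subr_ge0 mxtrace_pullback_proj_ge1.
by apply/eqP; rewrite -subr_eq0; apply/eqP/(psumr_eq0P gap_ge0 gap0).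
Qed.

Lemma pullback_proj_SIC : SIC P.
Proof.
have trPP k l : \tr (P k *m P l) = (d%:R * (k == l)%:R + 1) / d.+1%:R.
  by rewrite mxtraceM_pullback_proj !mxtrace_pullback_proj1 mulr1.
split=> [k|//]; split; first exact: pullback_proj_hermitian.
apply: rank_one_projector_mxtrace; rewrite ?mxtrace_pullback_proj1 //.
- exact: pullback_proj_hermitian.
- exact: pullback_proj_psd.
- by rewrite trPP eqxx mulr1 -natr1 divff // natr1 pnatr_eq0.
Qed.

End Pullback.

Lemma RlinBij_SIC : exists Pi : 'I_(d ^ 2) -> mat, SIC Pi /\
  forall rho, density rho -> forall j, f rho 0 j = d%:R^-1 * \tr (rho *m Pi j).
Proof.
have pull k : exists2 A, hermitian A & f A = delta_mx 0 k.
  by apply: f_lin.2.2.2 => i; rewrite mxE realn.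
have [A A_herm fA] := fin_all_exists2 pull.
exists (pullback_proj A); split; first exact: pullback_proj_SIC.
by move=> rho drho j; apply: RlinBij_pullbackE.
Qed.

End IsomorphismToSIC.

Lemma isomorphism_onto_SIC (C : numClosedFieldType) (d : nat) (Q : vec C d -> Prop)
    (g : mat C d -> vec C d) :
  (0 < d)%N -> qplex Q -> (forall rho, density rho -> Q (g rho)) ->
  isomorphism_onto g Q <->
  exists Pi : 'I_(d ^ 2) -> mat C d, SIC Pi /\
    forall rho, density rho -> forall j, g rho 0 j = d%:R^-1 * \tr (rho *m Pi j).
Proof.
move=> d_gt0 qQ gQ; split=> [[f [f_lin [fg [QE f_ip]]]] | [Pi [sicPi gE]]].
  have f_simplex rho : density rho -> inDelta (f rho).
    by move=> drho; apply: (qQ.1 _ _).1; apply/QE; exists rho.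
  have [Pi [sicPi fE]] := RlinBij_SIC d_gt0 f_lin f_ip f_simplex.
  by exists Pi; split=> // rho drho j; rewrite -fg // fE.
exact: (sic_map_isomorphism d_gt0 sicPi qQ gQ gE).
Qed.

Theorem mainTheorem17 (C : numClosedFieldType) (d : nat) (hd : (2 <= d)%N) :
  (forall (Q : vec C d -> Prop) (g : mat C d -> vec C d),
     qplex Q ->
     (forall rho, density rho -> Q (g rho)) ->
     (isomorphism_onto g Q <->
      exists Pi : 'I_(d ^ 2) -> mat C d,
        SIC Pi /\
        forall rho, density rho ->
          forall j, g rho 0 j = (d%:R)^-1 * \tr (rho *m Pi j)))
  /\
  ((exists Pi : 'I_(d ^ 2) -> mat C d, SIC Pi) <->
   (exists Q : vec C d -> Prop, hilbert_qplex Q)).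
Proof.
have d_gt0 : (0 < d)%N by apply: leq_trans hd.
split=> [Q g|]; first exact: isomorphism_onto_SIC.
split=> [[Pi sicPi] | [Q [qQ [g iso]]]].
  exists (sic_states Pi); split; first exact: sic_states_qplex.
  by exists (sic_map Pi); apply: sic_map_isomorphism_onto.
have gQ rho : density rho -> Q (g rho).
  by case: iso => f [_ [fg [QE _]]] drho; rewrite -fg //; apply/QE; exists rho.
by have [Pi [sicPi _]] := (isomorphism_onto_SIC d_gt0 qQ gQ).1 iso; exists Pi.
Qed.
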